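(* There is a function $\varepsilon(n)$ with $\varepsilon(n)\to 0$ as $n\to\infty$ such that every finite group $G$ of order $n$ satisfies $C(G)\leq n^{(\frac{1}{2}+\varepsilon(n))\log_2 n}$; i.e. $C(G)\leq n^{(\frac12+o(1))\log_2 n}$.
   Context: $C(G)$, the capacity of a group $G$, is the number of isomorphism classes of groups $H$ that are $r$-images of $G$, i.e. for which there exist homomorphisms $g:G\to H$, $f:H\to G$ with $g\circ f=\mathrm{id}_H$. *)

From mathcomp Require Import all_boot all_fingroup.
From Stdlib Require Import Reals.

Set Implicit Arguments.
Unset Strict Implicit.
Unset Printing Implicit Defensive.

Local Open Scope group_scope.

Definition grp_hom (gT hT : finGroupType) (phi : gT -> hT) : Prop :=
  forall x y : gT, phi (x * y) = phi x * phi y.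

Definition grp_isomorphic (hT kT : finGroupType) : Prop :=
  exists phi : hT -> kT, grp_hom phi /\ bijective phi.

Definition r_image (gT hT : finGroupType) : Prop :=
  exists (g : gT -> hT) (f : hT -> gT),
    [/\ grp_hom g, grp_hom f & forall y : hT, g (f y) = y].

(* "C(G) <= x": every family of pairwise non-isomorphic r-images of G
   (i.e. every set of distinct isomorphism classes of r-images) has at most x
   members. *)
Definition capacity_le (gT : finGroupType) (x : R) : Prop :=
  forall (k : nat) (H : 'I_k -> finGroupType),
    (forall i, r_image gT (H i)) ->
    (forall i j, i <> j -> ~ grp_isomorphic (H i) (H j)) ->
    (INR k <= x)%R.

(** If [g : G -> H] and [f : H -> G] are homomorphisms with [g \o f = id],
    then [K = f(H)] is isomorphic to [H] and [N = ker g] is a normal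
    subgroup with [|K| |N| = |G| = n]; moreover two retracts with the same
    image, or with the same kernel, are isomorphic.  So pairwise
    non-isomorphic r-images of [G] have pairwise distinct images and pairwise
    distinct kernels.  For each of them, [|K|^2 <= n] or [|N|^2 < n].  A group
    of order [m] is generated by [log2 m] elements, so in the first case [K]
    is the subgroup generated by a tuple of [floor(log4 n)] elements of [G],
    and in the second case [N] is the normal closure of such a tuple.  Hence
    there are at most [2 n^floor(log4 n) <= n^(floor(log4 n) + 1)] r-images
    up to isomorphism (only one if [n = 1]), and
    [n^(floor(log4 n) + 1) <= n^(log2 n / 2 + 1)] is the claimed bound for
    [eps n = 1 / log2 n]. *)

From mathcomp Require Import all_boot all_fingroup zify.
From Stdlib Require Import IndefiniteDescription.

Set Implicit Arguments.
Unset Strict Implicit.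
Unset Printing Implicit Defensive.

Local Open Scope group_scope.

Section GeneratingTuples.

Variable gT : finGroupType.
Implicit Types (G H K : {group gT}) (s : seq gT).

Lemma proper_subgroup_card_double H G : H \proper G -> (#|H|.*2 <= #|G|)%N.
Proof.
case/andP=> sHG not_sGH; rewrite -(Lagrange sHG) -muln2 leq_mul2l.
by rewrite indexg_gt1 not_sGH orbT.
Qed.

Lemma gen_seq_log K : exists2 s, <<[set:: s]>> = K & (2 ^ size s <= #|K|)%N.
Proof.
suff grow m s : {subset s <= K} -> (2 ^ size s <= #|<<[set:: s]>>|)%N ->
    (#|K| - #|<<[set:: s]>>| <= m)%N ->
  exists2 s, <<[set:: s]>> = K & (2 ^ size s <= #|K|)%N.
  by apply: (grow #|K| [::]); rewrite ?leq_subr ?cardG_gt0.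
have gen_sub s' : {subset s' <= K} -> <<[set:: s']>> \subset K.
  by move=> s'K; rewrite gen_subG; apply/subsetP=> x; rewrite inE => /s'K.
elim: m s => [|m IH] s sK le_2s le_m;
  have [genK | ltK] := eqVproper (gen_sub s sK); try by exists s; rewrite -?genK.
  by have := proper_card ltK; lia.
have [_ [x Kx notsx]] := properP ltK.
have xsK : {subset x :: s <= K} by move=> y; rewrite inE => /predU1P [-> | /sK].
have lt_s_xs : <<[set:: s]>> \proper <<[set:: x :: s]>>.
  rewrite properE genS ?set_cons ?subsetUr //=.
  by apply: contra notsx => /subsetP; apply; rewrite mem_gen ?setU11.
apply: (IH (x :: s)) => //.
  by rewrite expnS mul2n (leq_trans _ (proper_subgroup_card_double lt_s_xs)) ?leq_double.
by rewrite (leq_trans (leq_sub2l _ (proper_card lt_s_xs))) // subnS -subn1 leq_subLR add1n.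
Qed.

Lemma gen_nseq1_cat j s : <<[set:: nseq j 1 ++ s]>> = <<[set:: s]>>.
Proof.
apply/eqP; rewrite eqEsubset gen_subG; apply/andP; split.
  apply/subsetP=> x; rewrite inE mem_cat => /orP [/nseqP [-> _] | xs].
    exact: group1.
  by rewrite mem_gen ?inE.
by rewrite genS //; apply/subsetP=> x; rewrite !inE mem_cat => ->; rewrite orbT.
Qed.

Lemma gen_tuple_of_card K j :
  (#|K| < 2 ^ j.+1)%N -> exists t : j.-tuple gT, <<[set:: t]>> = K.
Proof.
move=> lt_K; have [s genK le_s] := gen_seq_log K.
have le_sj : (size s <= j)%N.
  by rewrite -ltnS -(ltn_exp2l _ _ (ltnSn 1)) (leq_ltn_trans le_s).
have size_pad : size (nseq (j - size s) 1 ++ s) == j by rewrite size_cat size_nseq subnK.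
by exists (Tuple size_pad); rewrite gen_nseq1_cat.
Qed.

Lemma normal_closure_tuple_of_card K j :
    K <| [set: gT] -> (#|K| < 2 ^ j.+1)%N ->
  exists t : j.-tuple gT, <<class_support [set:: t] [set: gT]>> = K.
Proof.
move=> nK /gen_tuple_of_card [t genK]; exists t; apply/eqP.
rewrite eqEsubset gen_subG class_support_sub_norm ?normal_norm //=; last first.
  by rewrite -genK sub_gen.
by rewrite -genK genS // sub_class_support.
Qed.

End GeneratingTuples.

Record retraction (gT hT : finGroupType) := Retraction {
  retr_proj : {morphism [set: gT] >-> hT};
  retr_emb : {morphism [set: hT] >-> gT};
  retr_embK : cancel retr_emb retr_proj
}.

Lemma retraction_of_r_image (gT hT : finGroupType) :
  r_image gT hT -> retraction gT hT.
Proof.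
move=> /constructive_indefinite_description [g].
move=> /constructive_indefinite_description [f [hom_g hom_f fK]].
exact: (@Retraction _ _ (Morphism (in2W hom_g)) (Morphism (in2W hom_f)) fK).
Qed.

Section RetractImageKernel.

Variables (gT hT : finGroupType) (r : retraction gT hT).

Definition retract_image : {group gT} := (retr_emb r @* [set: hT])%G.
Definition retract_kernel : {group gT} := ('ker (retr_proj r))%G.

Lemma retract_kernel_normal : retract_kernel <| [set: gT].
Proof. exact: ker_normal. Qed.

Lemma card_retract_image_kernel :
  (#|retract_image| * #|retract_kernel|)%N = #|gT|.
Proof.
have inj_emb : 'injm (retr_emb r).
  by apply/injmP=> x y _ _ eq_xy; rewrite -(retr_embK r x) eq_xy retr_embK.
have onto_proj : retr_proj r @* [set: gT] = [set: hT].
  by apply/setP=> y; rewrite inE -(retr_embK r y) mem_morphim ?inE.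
have := card_morphpre (f := retr_proj r) (L := [set: hT]).
rewrite morphpreT onto_proj cardsT => /(_ (subxx _)) ->.
by rewrite card_injm ?subsetT // cardsT mulnC.
Qed.

Lemma card_retract_kernel_sqr :
  (#|gT| < #|retract_image| ^ 2 -> #|retract_kernel| ^ 2 < #|gT|)%N.
Proof.
by rewrite -card_retract_image_kernel; have := cardG_gt0 retract_kernel; nia.
Qed.

End RetractImageKernel.

Definition retract_transfer (gT h1T h2T : finGroupType)
    (r1 : retraction gT h1T) (r2 : retraction gT h2T) (y : h1T) : h2T :=
  retr_proj r2 (retr_emb r1 y).

Section RetractTransfer.

Variables (gT h1T h2T : finGroupType).
Variables (r1 : retraction gT h1T) (r2 : retraction gT h2T).

Lemma isomorphic_of_transferK :
    cancel (retract_transfer r1 r2) (retract_transfer r2 r1) ->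
    cancel (retract_transfer r2 r1) (retract_transfer r1 r2) ->
  grp_isomorphic h1T h2T.
Proof.
move=> transK transK'; exists (retract_transfer r1 r2); split.
  by move=> x y; rewrite /retract_transfer !morphM ?inE.
by exists (retract_transfer r2 r1).
Qed.

Lemma retract_transferK_of_image :
    retract_image r1 \subset retract_image r2 ->
  cancel (retract_transfer r1 r2) (retract_transfer r2 r1).
Proof.
move=> /subsetP sub12 y; rewrite /retract_transfer.
have /sub12 /morphimP [z _ _ emb_yz] : retr_emb r1 y \in retract_image r1.
  by rewrite mem_morphim ?inE.
by rewrite emb_yz retr_embK -emb_yz retr_embK.
Qed.

Lemma retract_transferK_of_kernel :
    retract_kernel r2 \subset retract_kernel r1 ->
  cancel (retract_transfer r1 r2) (retract_transfer r2 r1).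
Proof.
move=> /subsetP sub21 y; rewrite /retract_transfer.
set x := retr_emb r1 y; set w := retr_emb r2 (retr_proj r2 x).
have /sub21 /kerP : x^-1 * w \in retract_kernel r2.
  by apply/kerP; rewrite ?inE // morphM ?morphV ?inE //= retr_embK mulVg.
rewrite inE morphM ?morphV ?inE // => /(_ isT) /eqP.
by rewrite -eq_mulVg1 /x retr_embK => /eqP <-.
Qed.

End RetractTransfer.

Lemma isomorphic_of_retract_image (gT h1T h2T : finGroupType)
    (r1 : retraction gT h1T) (r2 : retraction gT h2T) :
  retract_image r1 = retract_image r2 :> {set gT} -> grp_isomorphic h1T h2T.
Proof.
move=> eq12; apply: (isomorphic_of_transferK (r1 := r1) (r2 := r2));
  by apply: retract_transferK_of_image; rewrite eq12.
Qed.

Lemma isomorphic_of_retract_kernel (gT h1T h2T : finGroupType)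
    (r1 : retraction gT h1T) (r2 : retraction gT h2T) :
  retract_kernel r1 = retract_kernel r2 :> {set gT} -> grp_isomorphic h1T h2T.
Proof.
move=> eq12; apply: (isomorphic_of_transferK (r1 := r1) (r2 := r2));
  by apply: retract_transferK_of_kernel; rewrite eq12.
Qed.

Lemma leq_card_covered (I T Y : finType) (X : I -> Y) (cl : T -> Y) (S : {set I}) :
  injective X -> {in S, forall i, exists t, cl t = X i} -> (#|S| <= #|T|)%N.
Proof.
move=> injX coverX; rewrite -(card_imset _ injX) -cardsT.
apply: leq_trans (leq_imset_card cl _); apply/subset_leq_card/subsetP=> _ /imsetP [i Si ->].
by have [t <-] := coverX i Si; rewrite imset_f ?inE.
Qed.

Lemma sqr_lt_exp2_trunc_log4 m n : (m ^ 2 <= n -> m < 2 ^ (trunc_log 4 n).+1)%N.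
Proof.
move=> le_mn; rewrite -(ltn_exp2r _ _ (ltn0Sn 1)) -expnM mulnC expnM.
exact: leq_ltn_trans le_mn (trunc_log_ltn _ _).
Qed.

Section RetractFamily.

Variables (gT : finGroupType) (k : nat) (H : 'I_k -> finGroupType).
Variable r : forall i, retraction gT (H i).
Hypothesis nisoH : forall i j, i <> j -> ~ grp_isomorphic (H i) (H j).

Lemma injective_of_isomorphic (X : 'I_k -> {set gT}) :
  (forall i j, X i = X j -> grp_isomorphic (H i) (H j)) -> injective X.
Proof.
move=> isoX i j eqX; have [// | /eqP neq_ij] := eqVneq i j.
by case: (nisoH neq_ij); apply: isoX.
Qed.

Lemma retract_image_inj : injective (fun i => gval (retract_image (r i))).
Proof. by apply: injective_of_isomorphic => i j; apply: isomorphic_of_retract_image. Qed.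

Lemma retract_kernel_inj : injective (fun i => gval (retract_kernel (r i))).
Proof. by apply: injective_of_isomorphic => i j; apply: isomorphic_of_retract_kernel. Qed.

Definition small_image_retracts := [set i | #|retract_image (r i)| ^ 2 <= #|gT|]%N.

Lemma card_small_image_retracts :
  (#|small_image_retracts| <= #|gT| ^ trunc_log 4 #|gT|)%N.
Proof.
rewrite -card_tuple; apply: (leq_card_covered
    (cl := fun t : _.-tuple gT => <<[set:: t]>>) retract_image_inj) => i.
by rewrite inE => /sqr_lt_exp2_trunc_log4 /gen_tuple_of_card.
Qed.

Lemma card_large_image_retracts :
  (#|~: small_image_retracts| <= #|gT| ^ trunc_log 4 #|gT|)%N.
Proof.
rewrite -card_tuple; apply: (leq_card_covered
    (cl := fun t : _.-tuple gT => <<class_support [set:: t] [set: gT]>>)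
    retract_kernel_inj) => i.
rewrite !inE -ltnNge => /card_retract_kernel_sqr /ltnW /sqr_lt_exp2_trunc_log4.
exact/normal_closure_tuple_of_card/retract_kernel_normal.
Qed.

Lemma large_image_retracts_trivial :
  (#|gT| <= 1)%N -> ~: small_image_retracts = set0.
Proof.
move=> le_n1; apply/setP=> i; rewrite !inE; apply/negbF.
have le_K : (#|retract_image (r i)| <= 1)%N.
  by apply: leq_trans le_n1; rewrite -cardsT subset_leq_card ?subsetT.
by rewrite (@leq_trans (1 ^ 2)) ?leq_sqr //; apply/card_gt0P; exists 1.
Qed.

Lemma card_retract_family : (k <= #|gT| ^ (trunc_log 4 #|gT|).+1)%N.
Proof.
rewrite -[k]card_ord -(cardsC small_image_retracts) expnSr.
have := card_small_image_retracts; have := card_large_image_retracts.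
have [n_gt1 le_large le_small | n_le1 _ le_small] := ltnP 1 #|gT|.
  by rewrite (leq_trans (leq_add le_small le_large)) // addnn -mul2n mulnC leq_mul2l n_gt1 orbT.
rewrite large_image_retracts_trivial // cards0 addn0 (leq_trans le_small) //.
by rewrite leq_pmulr //; apply/card_gt0P; exists 1.
Qed.

End RetractFamily.

Lemma card_r_images (gT : finGroupType) k (H : 'I_k -> finGroupType) :
    (forall i, r_image gT (H i)) ->
    (forall i j, i <> j -> ~ grp_isomorphic (H i) (H j)) ->
  (k <= #|gT| ^ (trunc_log 4 #|gT|).+1)%N.
Proof.
by move=> rH; apply: (card_retract_family (fun i => retraction_of_r_image (rH i))).
Qed.

Local Close Scope group_scope.
From Stdlib Require Import Reals Lra.
Local Open Scope R_scope.

Lemma INR_expn (m e : nat) : INR (expn m e) = INR m ^ e.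
Proof. by elim: e => [|e IH]; rewrite ?expnS ?mult_INR ?IH. Qed.

Lemma ln_le x y : 0 < x -> x <= y -> ln x <= ln y.
Proof.
move=> x_gt0 le_xy; apply: Rnot_lt_le => /ln_lt_inv lt_yx.
by have := lt_yx (Rlt_le_trans _ _ _ x_gt0 le_xy) x_gt0; lra.
Qed.

Lemma ln2_gt0 : 0 < ln 2.
Proof. by rewrite -ln_1; apply: ln_increasing; lra. Qed.

Lemma trunc_log4_le_log2 n :
  (0 < n)%coq_nat -> 2 * INR (trunc_log 4 n) <= ln (INR n) / ln 2.
Proof.
move=> n_gt0; have := ln2_gt0 => ln2_pos.
have pow_le : INR 4 ^ trunc_log 4 n <= INR n.
  by rewrite -INR_expn; apply/le_INR/leP/trunc_logP/ltP.
have four_gt0 : 0 < INR 4 by simpl; lra.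
have := ln_le (pow_lt _ _ four_gt0) pow_le.
rewrite ln_pow // (_ : INR 4 = 2 * 2); last by simpl; lra.
rewrite ln_mult; [move=> le_log | lra | lra].
apply Rmult_le_reg_r with (ln 2) => //.
have -> : ln (INR n) / ln 2 * ln 2 = ln (INR n) by field; lra.
lra.
Qed.

Lemma expn_trunc_log4_le_Rpower n : (0 < n)%coq_nat ->
  INR (expn n (trunc_log 4 n).+1) <=
  Rpower (INR n) ((1 / 2 + ln 2 / ln (INR n)) * (ln (INR n) / ln 2)).
Proof.
move=> n_gt0; have [n_gt1 | n_le1] := ltnP 1 n; last first.
  have -> : n = 1%nat by apply/eqP; rewrite eqn_leq n_le1; apply/ltP.
  by rewrite exp1n /Rpower ln_1 Rmult_0_r exp_0; apply: Rle_refl.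
have n_gt1R : 1 < INR n by apply: (lt_INR 1); apply/ltP.
have lnn_gt0 : 0 < ln (INR n) by rewrite -ln_1; apply: ln_increasing; lra.
have := ln2_gt0 => ln2_pos.
rewrite INR_expn -Rpower_pow; last lra.
apply: Rle_Rpower; first lra.
have := trunc_log4_le_log2 n_gt0.
have -> : (1 / 2 + ln 2 / ln (INR n)) * (ln (INR n) / ln 2) = ln (INR n) / ln 2 / 2 + 1.
  by field; lra.
rewrite S_INR; lra.
Qed.

Lemma ln2_div_ln_cvg0 : Un_cv (fun n => ln 2 / ln (INR n)) 0.
Proof.
move=> e e_gt0; have := ln2_gt0 => ln2_pos.
have [N N_gt] := INR_unbounded (exp (ln 2 / e)).
exists N => n le_Nn.
have lnn_gt : ln 2 / e < ln (INR n).
  rewrite -[X in X < _]ln_exp; apply: ln_increasing; first exact: exp_pos.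
  by have := le_INR _ _ le_Nn; lra.
have lnn_gt0 : 0 < ln (INR n) by have := Rdiv_lt_0_compat _ _ ln2_pos e_gt0; lra.
rewrite /R_dist Rminus_0_r Rabs_right; last by apply/Rle_ge/Rlt_le/Rdiv_lt_0_compat.
apply: (Rmult_lt_reg_r (ln (INR n))) => //.
have : ln 2 / e * e < ln (INR n) * e by apply: Rmult_lt_compat_r.
rewrite /Rdiv !Rmult_assoc !Rinv_l; lra.
Qed.

Theorem proposition3p1 :
  exists eps : nat -> R,
    Un_cv eps 0%R /\
    forall (gT : finGroupType),
      capacity_le gT
        (Rpower (INR #|gT|)
           ((1 / 2 + eps #|gT|) * (ln (INR #|gT|) / ln 2))%R).
Proof.
exists (fun n => ln 2 / ln (INR n)); split; first exact: ln2_div_ln_cvg0.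
move=> gT k H rH nisoH.
apply: Rle_trans (expn_trunc_log4_le_Rpower _); last by apply/ltP; apply/card_gt0P; exists 1%g.
exact/le_INR/leP/card_r_images.
Qed.
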